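(* If the communication graph of a system with $n$ trajectories is a tree, then its uncovering-resilience is $n-1$.
   Context: Model. A system consists of pairwise disjoint unit circles $C_1,\dots,C_n$ in the plane (trajectories) and a communication range $r>0$. Its communication graph $G$ has vertex set $\{C_1,\dots,C_n\}$, $C_i,C_j$ adjacent iff the distance between their centres is at most $2+r$. Positions on a circle are angles (mod $2\pi$). For an edge $(i,j)$, the link position $\phi_{ij}$ is the angle of the point of $C_i$ closest to $C_j$. A schedule $F=(f,g)$ assigns each circle a starting angle $f(C_i)$ and direction $g(C_i)\in\{1,-1\}$; a robot following it on $C_i$ is at $f(C_i)+g(C_i)2\pi t$ at time $t$. $F$ is a synchronization schedule if $g(C_i)=-g(C_j)$ for adjacent circles and robots following $F$ on adjacent $C_i,C_j$ are at $\phi_{ij},\phi_{ji}$ at exactly the same times. A synchronized communication system (SCS) consists of $n$ robots, initially one per circle, following a synchronization schedule, with the switching rule: when a robot on $C_i$ reaches $\phi_{ij}$ and $C_j$ is empty, it instantly passes to $C_j$ and follows the schedule of $C_j$; if $C_j$ has a robot, they meet and each stays on its circle. A partial SCS arises by letting some robots leave (possibly at different times). A circle is covered if every point of it is visited periodically by surviving robots. The uncovering-resilience is the largest $k$ such that whichever $k$ robots leave, all circles remain covered. (This value does not depend on the chosen synchronization schedule, so it is a property of the system/communication graph.) *)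

From Stdlib Require Import Reals.
From mathcomp Require Import all_boot.

Set Implicit Arguments.
Unset Strict Implicit.
Unset Printing Implicit Defensive.

Local Open Scope R_scope.

Section System.
Variable n : nat.
Variable c : 'I_n -> R * R.   (* centres of the unit circles C_1..C_n *)
Variable r : R.

Definition cdist (i j : 'I_n) : R :=
  sqrt ((fst (c j) - fst (c i)) ^ 2 + (snd (c j) - snd (c i)) ^ 2).

Definition disjoint_circles : Prop :=
  forall i j : 'I_n, i <> j -> 2 < cdist i j.

Definition comm_adj : rel 'I_n :=
  fun i j => (i != j) && (if Rle_dec (cdist i j) (2 + r) then true else false).

Definition point_at (i : 'I_n) (theta : R) : R * R :=
  (fst (c i) + cos theta, snd (c i) + sin theta).

(* the point of C_i closest to C_j (its angle is the link position phi_ij) *)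
Definition closest_point (i j : 'I_n) : R * R :=
  (fst (c i) + (fst (c j) - fst (c i)) / cdist i j,
   snd (c i) + (snd (c j) - snd (c i)) / cdist i j).

(* the link positions on each circle are pairwise distinct
   (implicit well-definedness assumption) *)
Definition distinct_links : Prop :=
  forall i j k : 'I_n, comm_adj i j -> comm_adj i k -> j <> k ->
    closest_point i j <> closest_point i k.

Record schedule := Schedule { sch_f : 'I_n -> R ; sch_g : 'I_n -> R }.

Definition is_schedule (F : schedule) : Prop :=
  forall i, sch_g F i = 1 \/ sch_g F i = -1.

Definition robot_angle (F : schedule) (i : 'I_n) (t : R) : R :=
  sch_f F i + sch_g F i * (2 * PI * t).

Definition robot_point (F : schedule) (i : 'I_n) (t : R) : R * R :=
  point_at i (robot_angle F i t).

Definition at_link (F : schedule) (i j : 'I_n) (t : R) : Prop :=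
  robot_point F i t = closest_point i j.

Definition sync_schedule (F : schedule) : Prop :=
  is_schedule F /\
  (forall i j, comm_adj i j -> sch_g F i = - sch_g F j) /\
  (forall i j, comm_adj i j -> forall t, at_link F i j t <-> at_link F j i t).

(* Partial SCS executions.  Robots are named by their initial circle.       *)
(* A state maps each robot to Some (circle it is on) or None (has left).    *)
(* L = set of robots that leave, tau rb = time at which robot rb leaves.    *)
Definition state := 'I_n -> option 'I_n.

Definition init_state : state := fun rb => Some rb.

Definition departed (L : {set 'I_n}) (tau : 'I_n -> R) (rb : 'I_n) (t : R) : Prop :=
  rb \in L /\ tau rb <= t.

(* circle j is empty at time t (robots leaving at time t are gone) *)
Definition empty_circle (L : {set 'I_n}) (tau : 'I_n -> R) (s : state) (t : R)
    (j : 'I_n) : Prop :=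
  forall rb, s rb = Some j -> departed L tau rb t.

(* the state at time t, given the state s just before time t *)
Definition step_ok (F : schedule) (L : {set 'I_n}) (tau : 'I_n -> R) (t : R)
    (s s' : state) : Prop :=
  forall rb,
    (departed L tau rb t -> s' rb = None) /\
    (~ departed L tau rb t ->
       (s rb = None -> s' rb = None) /\
       (forall i, s rb = Some i ->
          (exists j, comm_adj i j /\ at_link F i j t /\
                     empty_circle L tau s t j /\ s' rb = Some j) \/
          ((forall j, comm_adj i j -> at_link F i j t ->
                      ~ empty_circle L tau s t j) /\ s' rb = Some i))).

(* loc t = state at time t (for t >= 0): right-continuous, with left limits,
   and the state at t obtained from the left limit by the switching rule. *)
Definition execution (F : schedule) (L : {set 'I_n}) (tau : 'I_n -> R)
    (loc : R -> state) : Prop :=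
  step_ok F L tau 0 init_state (loc 0) /\
  (forall t, 0 < t -> exists (eps : R) (s : state), 0 < eps <= t /\
       (forall u, t - eps < u < t -> loc u = s) /\ step_ok F L tau t s (loc t)) /\
  (forall t, 0 <= t -> exists eps : R, 0 < eps /\
       forall u, t <= u < t + eps -> loc u = loc t).

Definition visited (F : schedule) (loc : R -> state) (i : 'I_n) (theta t : R)
    : Prop :=
  exists rb, loc t rb = Some i /\ robot_point F i t = point_at i theta.

Definition covered (F : schedule) (loc : R -> state) (i : 'I_n) : Prop :=
  forall theta, exists p T0 : R, 0 < p /\
    forall m : nat, exists t, T0 + INR m * p <= t < T0 + INR (S m) * p /\
      visited F loc i theta t.

Definition resilient (F : schedule) (k : nat) : Prop :=
  forall (L : {set 'I_n}) (tau : 'I_n -> R) (loc : R -> state),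
    #|L| = k -> (forall rb, rb \in L -> 0 <= tau rb) ->
    execution F L tau loc -> forall i, covered F loc i.

Definition uncovering_resilience (F : schedule) (k : nat) : Prop :=
  (k <= n)%N /\ resilient F k /\
  (forall k' : nat, (k < k' <= n)%N -> ~ resilient F k').

End System.

Definition connected_graph (n : nat) (e : rel 'I_n) : Prop :=
  forall i j, connect e i j.

Definition acyclic_graph (n : nat) (e : rel 'I_n) : Prop :=
  forall s : seq 'I_n, (3 <= size s)%N -> uniq s -> ~~ cycle e s.

Definition is_tree (n : nat) (e : rel 'I_n) : Prop :=
  connected_graph e /\ acyclic_graph e.

From Stdlib Require Import Reals Lra Lia Classical ClassicalEpsilon.
From mathcomp Require Import all_boot zify.

(* After the n - 1 departures a single robot remains, and from the last
   departure time on it moves alone, switching circle at every link position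
   it reaches.  The link times of an edge form a translate of the integers and
   the future of the robot depends only on its circle and its time modulo 1,
   so its walk is eventually periodic.  In a tree, a walk leaving circle j
   along the edge to k can only come back to j along the same edge, and by
   synchronization it arrives at the phase (time modulo 1) at which it left.
   Hence the set of phases at which the robot occupies j is open and closed
   under left limits, i.e. it is everything: the robot reaches every
   neighbour of j, hence every circle, and sweeps each of them periodically.
   If all n robots leave nothing is covered, so n - 1 is optimal. *)

Set Implicit Arguments.
Unset Strict Implicit.
Local Open Scope R_scope.

Lemma cos_sin_2PI_IZR (z : Z) : cos (2 * PI * IZR z) = 1 /\ sin (2 * PI * IZR z) = 0.
Proof.
have sin_z : sin (IZR z * PI) = 0 by apply: sin_eq_0_1; exists z.
split; last by apply: sin_eq_0_1; exists (2 * z)%Z; rewrite mult_IZR; ring.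
replace (2 * PI * IZR z) with (2 * (IZR z * PI)) by ring.
rewrite cos_2a_sin sin_z; ring.
Qed.

Lemma cos_sin_shift_2PI_IZR (a : R) (z : Z) :
  cos (a + 2 * PI * IZR z) = cos a /\ sin (a + 2 * PI * IZR z) = sin a.
Proof. by have [c1 s0] := cos_sin_2PI_IZR z; rewrite cos_plus sin_plus c1 s0; split; ring. Qed.

Lemma cos_sin_eq_2PI_IZR (a b : R) :
  cos a = cos b -> sin a = sin b -> exists z : Z, a - b = 2 * PI * IZR z.
Proof.
move=> eq_cos eq_sin.
have cos_ab : cos (a - b) = 1.
  by rewrite cos_minus eq_cos eq_sin -(sin2_cos2 b); rewrite /Rsqr; ring.
have sin_half : sin ((a - b) / 2) = 0.
  replace (a - b) with (2 * ((a - b) / 2)) in cos_ab by field.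
  rewrite cos_2a_sin in cos_ab.
  by case: (Rmult_integral (sin ((a - b) / 2)) (sin ((a - b) / 2))); lra.
by have [k Hk] := sin_eq_0_0 _ sin_half; exists k; lra.
Qed.

Lemma real_induction (a : R) (P : R -> Prop) :
  P a ->
  (forall t, a <= t -> P t -> exists e, 0 < e /\ forall u, t <= u < t + e -> P u) ->
  (forall t, a < t -> (forall u, a <= u < t -> P u) -> P t) ->
  forall t, a <= t -> P t.
Proof.
move=> Pa Pright Pleft b ab; apply: NNPP => notPb.
pose E x := a <= x <= b /\ forall u, a <= u <= x -> P u.
have Ea : E a by split; [lra | move=> u ?; replace u with a by lra].
have [|m [m_ub m_lub]] := completeness E _ (ex_intro _ a Ea).
  by exists b => x [? _]; lra.
have am : a <= m by apply: m_ub.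
have mb : m <= b by apply: m_lub => x [? _]; lra.
have P_below_m : forall u, a <= u < m -> P u.
  move=> u [au um]; apply: NNPP => notPu.
  suff : m <= u by lra.
  apply: m_lub => x [_ Px]; apply: Rnot_lt_le => ux; apply: notPu; apply: Px; lra.
have Pm : P m.
  by case: (Rle_lt_or_eq_dec _ _ am) => [am' | <-]; [apply: Pleft | ].
have [e [e_pos P_after_m]] := Pright m am Pm.
have [bm | mb'] := Req_dec b m; first by apply: notPb; rewrite bm.
have : E (Rmin (m + e / 2) b).
  split; first by split; [apply: Rmin_glb; lra | apply: Rmin_r].
  move=> u [au um]; have := Rmin_l (m + e / 2) b => ?.
  by case: (Rlt_le_dec u m) => ?; [apply: P_below_m | apply: P_after_m]; lra.
move/m_ub; rewrite /Rmin; case: Rle_dec; lra.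
Qed.

Lemma exists_between_near (t0 t e : R) :
  t0 < t -> 0 < e -> exists u, t0 < u < t /\ t - e < u.
Proof.
move=> t0t e_pos; exists (Rmax (t - e / 2) ((t0 + t) / 2)).
have := Rmax_l (t - e / 2) ((t0 + t) / 2); have := Rmax_r (t - e / 2) ((t0 + t) / 2).
rewrite /Rmax; case: Rle_dec; lra.
Qed.

Lemma finite_upper_bound (T : finType) (f : T -> R) : exists M, 0 <= M /\ forall x, f x <= M.
Proof.
suff [M [M_ge0 M_ub]] : exists M, 0 <= M /\ forall x, x \in enum T -> f x <= M.
  by exists M; split=> // x; apply: M_ub; rewrite mem_enum.
elim: (enum T) => [|y s [M [M_ge0 M_ub]]]; first by exists 0; split; [lra | ].
exists (Rmax (f y) M); split; first by apply: Rle_trans (Rmax_r _ _).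
move=> x; rewrite in_cons => /orP [/eqP -> | /M_ub]; first exact: Rmax_l.
by move/Rle_trans; apply; apply: Rmax_r.
Qed.

Definition next_point (S : R -> Prop) (t t' : R) : Prop :=
  t < t' /\ S t' /\ forall s, t < s < t' -> ~ S s.

Definition left_isolated (S : R -> Prop) : Prop :=
  forall u, exists w, w < u /\ forall s, w < s < u -> ~ S s.

Section IntegerTranslates.
Variables (S : R -> Prop) (t0 : R).
Hypothesis S_translates : forall t, S t <-> exists z : Z, t = t0 + IZR z.

Lemma translates_next_point (t : R) : exists t', next_point S t t' /\ t' <= t + 1.
Proof.
have [up_gt up_le] := archimed (t - t0).
exists (t0 + IZR (up (t - t0))); split; last lra.
split; first lra; split; first by apply/S_translates; exists (up (t - t0)).
move=> s s_in /S_translates [z sz].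
have z_lt : (z < up (t - t0))%Z by apply: lt_IZR; lra.
have : IZR z <= IZR (up (t - t0) - 1) by apply: IZR_le; lia.
rewrite minus_IZR; lra.
Qed.

Lemma translates_left_isolated : left_isolated S.
Proof.
move=> u; have [t' [[t't [St' free]] t'u]] := translates_next_point (u - 1).
have [t'_lt_u | u_le_t'] := Rlt_le_dec t' u; last first.
  by exists (u - 1); split=> [|s s_in]; [lra | apply: free; lra].
exists t'; split=> // s s_in /S_translates [z sz].
have [z' t'z'] := proj1 (S_translates t') St'.
have : (0 < z - z' < 1)%Z by split; apply: lt_IZR; rewrite minus_IZR; lra.
lia.
Qed.

End IntegerTranslates.

Lemma next_point_union (T : eqType) (S : T -> R -> Prop) (l : seq T) (t : R) :
  l != [::] -> (forall x, x \in l -> exists t', next_point (S x) t t') ->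
  exists t', next_point (fun s => exists2 x, x \in l & S x s) t t'.
Proof.
elim: l => [//|a l IH] _ next_l.
have [t2 [tt2 [Sat2 free2]]] := next_l a (mem_head a l).
have [->|l_nil] := eqVneq l [::].
  exists t2; split=> //; split; first by exists a; rewrite ?mem_head.
  by move=> s s_in [x]; rewrite mem_seq1 => /eqP ->; apply: free2.
have [t1 [tt1 [[x1 x1l Sx1] free1]]] :
    exists t', next_point (fun s => exists2 x, x \in l & S x s) t t'.
  by apply: IH => // x xl; apply: next_l; rewrite in_cons xl orbT.
have free_both s x : s < Rmin t1 t2 -> t < s -> x \in a :: l -> ~ S x s.
  have := Rmin_l t1 t2; have := Rmin_r t1 t2 => m2 m1 st ts.
  rewrite in_cons => /orP [/eqP -> | xl] Sxs; first by apply: (free2 s _ Sxs); lra.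
  by apply: (free1 s); [lra | exists x].
exists (Rmin t1 t2); split; first by apply: Rmin_glb_lt.
split=> [|s [ts st] [x xl Sxs]]; last exact: free_both st ts xl Sxs.
rewrite /Rmin; case: Rle_dec => _; [exists x1 | exists a] => //; last exact: mem_head.
by rewrite in_cons x1l orbT.
Qed.

Lemma left_isolated_union (T : eqType) (S : T -> R -> Prop) (l : seq T) :
  (forall x, x \in l -> left_isolated (S x)) ->
  left_isolated (fun s => exists2 x, x \in l & S x s).
Proof.
elim: l => [_ u | a l IH iso_l u].
  by exists (u - 1); split=> [|s _ [x]]; [lra | rewrite in_nil].
have [w1 [w1u free1]] :
    exists w, w < u /\ forall s, w < s < u -> ~ exists2 x, x \in l & S x s.
  by apply: IH => x xl; apply: iso_l; rewrite in_cons xl orbT.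
have [w2 [w2u free2]] := iso_l a (mem_head a l) u.
exists (Rmax w1 w2); split; first by rewrite /Rmax; case: Rle_dec.
have := Rmax_l w1 w2; have := Rmax_r w1 w2 => m2 m1 s s_in [x].
rewrite in_cons => /orP [/eqP -> | xl] Sxs; first by apply: (free2 s _ Sxs); lra.
by apply: (free1 s); [lra | exists x].
Qed.

Lemma acyclic_path_back (n : nat) (e : rel 'I_n) (j k : 'I_n) (p : seq 'I_n) :
  acyclic_graph e -> e j k -> path e k p -> j \notin k :: p -> e (last k p) j ->
  last k p = k.
Proof.
move=> acyc ejk; case/shortenP=> p' p'_path p'_uniq p'_sub j_notin ej.
case: p' p'_path p'_uniq p'_sub ej => [// | y p'] p'_path p'_uniq p'_sub ej.
have j_uniq : uniq (j :: k :: y :: p').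
  rewrite cons_uniq p'_uniq andbT; apply: contra j_notin; rewrite !in_cons.
  by case/orP=> [-> // | /p'_sub ->]; rewrite orbT.
have := acyc [:: j, k, y & p'] isT j_uniq; rewrite /cycle rcons_path /= ejk.
by move: p'_path => /= ->; rewrite ej.
Qed.

Lemma connected_neighbour (n : nat) (e : rel 'I_n) :
  connected_graph e -> (1 < n)%N -> forall i, exists k, e i k.
Proof.
move=> conn n_gt1 i.
have [j ij] : exists j, j != i.
  have n_pos : (0 < n)%N by apply: ltn_trans n_gt1.
  have [<- | ] := eqVneq (Ordinal n_pos) i; last by exists (Ordinal n_pos).
  by exists (Ordinal n_gt1); apply/eqP => /(congr1 val).
case/connectP: (conn i j) => -[/= _ ji | k p /= /andP [ik _] _]; last by exists k.
by rewrite ji eqxx in ij.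
Qed.

Section SynchronizedSystem.
Variables (n : nat) (c : 'I_n -> R * R) (r : R) (F : schedule n).
Hypothesis circles_disjoint : disjoint_circles c.
Hypothesis F_sync : sync_schedule c r F.

Local Notation adj := (comm_adj c r).
Local Notation link := (at_link c F).

Lemma point_at_shift i a (z : Z) : point_at c i (a + 2 * PI * IZR z) = point_at c i a.
Proof. by rewrite /point_at; have [-> ->] := cos_sin_shift_2PI_IZR a z. Qed.

Lemma point_at_eq_mod i a b :
  point_at c i a = point_at c i b -> exists z : Z, a - b = 2 * PI * IZR z.
Proof. by case=> /Rplus_eq_reg_l eq_cos /Rplus_eq_reg_l; apply: cos_sin_eq_2PI_IZR. Qed.

Lemma comm_adj_neq i j : adj i j -> i <> j.
Proof. by case/andP=> /eqP. Qed.

Lemma comm_adj_sym i j : adj i j -> adj j i.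
Proof.
rewrite /comm_adj; have -> : cdist c i j = cdist c j i by rewrite /cdist; f_equal; ring.
by case/andP=> ij ->; rewrite eq_sym ij.
Qed.

Lemma closest_point_on_circle i j : i <> j -> exists phi, closest_point c i j = point_at c i phi.
Proof.
move=> ij; have d_gt2 := circles_disjoint ij.
set dx := fst (c j) - fst (c i); set dy := snd (c j) - snd (c i).
set d := cdist c i j in d_gt2 *.
have d2 : d * d = dx * dx + dy * dy.
  by rewrite /d /cdist sqrt_sqrt -/dx -/dy; [ring | nra].
set x := dx / d; set y := dy / d.
have unit_xy : x * x + y * y = 1 by rewrite /x /y; field_simplify_eq; lra.
have x_in : -1 <= x <= 1 by nra.
have sqrt_y2 : sqrt (1 - x²) = Rabs y.
  by rewrite -sqrt_Rsqr_abs /Rsqr; f_equal; lra.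
rewrite /point_at /closest_point -/d -/dx -/dy -/x -/y.
have [y_ge0 | y_lt0] := Rle_lt_dec 0 y.
  exists (acos x); rewrite cos_acos // sin_acos // sqrt_y2 Rabs_right //; lra.
exists (- acos x); rewrite cos_neg sin_neg cos_acos // sin_acos // sqrt_y2 Rabs_left //.
by rewrite Ropp_involutive.
Qed.

Lemma sch_g_sign i : sch_g F i = 1 \/ sch_g F i = -1.
Proof. by case: F_sync => /(_ i). Qed.

Lemma robot_point_shift i t (z : Z) : robot_point c F i (t + IZR z) = robot_point c F i t.
Proof.
rewrite /robot_point /robot_angle; have [-> | ->] := sch_g_sign i.
  by rewrite -[in RHS](point_at_shift i _ z); f_equal; ring.
by rewrite -[in RHS](point_at_shift i _ (- z)) opp_IZR; f_equal; ring.
Qed.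

Lemma robot_point_onto i theta : exists u, robot_point c F i u = point_at c i theta.
Proof.
exists (sch_g F i * (theta - sch_f F i) / (2 * PI)).
rewrite /robot_point /robot_angle; f_equal; have := PI_RGT_0.
by have [-> | ->] := sch_g_sign i => ?; field; lra.
Qed.

Lemma robot_point_eq_mod i t t' :
  robot_point c F i t = robot_point c F i t' -> exists z : Z, t' = t + IZR z.
Proof.
move=> /point_at_eq_mod [z]; rewrite /robot_angle => Hz; have := PI_RGT_0.
have [g1 | g1] := sch_g_sign i; rewrite g1 in Hz.
  by exists (- z)%Z; rewrite opp_IZR; apply: (Rmult_eq_reg_l (2 * PI)); lra.
by exists z; apply: (Rmult_eq_reg_l (2 * PI)); lra.
Qed.

Lemma at_link_shift i j t (z : Z) : link i j (t + IZR z) <-> link i j t.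
Proof. by rewrite /at_link robot_point_shift. Qed.

Lemma at_link_translates i j : adj i j ->
  exists t0, forall t, link i j t <-> exists z : Z, t = t0 + IZR z.
Proof.
move=> ij; have [phi phi_ij] := closest_point_on_circle (comm_adj_neq ij).
have [t0 t0_phi] := robot_point_onto i phi.
have link_t0 : link i j t0 by rewrite /at_link t0_phi phi_ij.
exists t0 => t; split=> [link_t | [z ->]]; last exact/at_link_shift.
by apply: (@robot_point_eq_mod i); rewrite [LHS]link_t0 [RHS]link_t.
Qed.

Lemma at_link_sym i j t : adj i j -> link i j t <-> link j i t.
Proof. by move=> ij; case: F_sync => _ [_ /(_ i j ij t)]. Qed.

Definition at_some_link (i : 'I_n) (t : R) : Prop := exists2 k, adj i k & link i k t.

Lemma at_some_link_left_isolated i : left_isolated (at_some_link i).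
Proof.
move=> u; have [|w [wu free]] :=
  @left_isolated_union _ (fun k t => adj i k /\ link i k t) (enum 'I_n) _ u.
  move=> k _ v; case ik: (adj i k); last by exists (v - 1); split=> [|s _ []] //; lra.
  have [t0 t0_link] := at_link_translates ik.
  have [w [wv free]] := translates_left_isolated t0_link v.
  by exists w; split=> // s s_in [_]; apply: free.
exists w; split=> // s s_in [k ik ikt]; apply: (free s s_in).
by exists k; [rewrite mem_enum | split].
Qed.

Lemma next_some_link i t : (exists k, adj i k) ->
  exists t', next_point (at_some_link i) t t'.
Proof.
move=> [k0 ik0].
have [||t' [tt' [[k _ [ik ikt']] free]]] :=
  @next_point_union _ (fun k t => adj i k /\ link i k t) [seq k <- enum 'I_n | adj i k] t.
- by apply/eqP => /(congr1 (fun s => k0 \in s)); rewrite mem_filter ik0 mem_enum.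
- move=> k; rewrite mem_filter => /andP [ik _].
  have [t0 t0_link] := at_link_translates ik.
  have [t' [[tt' [t'_link free]] _]] := translates_next_point t0_link t.
  by exists t'; split=> //; split=> // s s_in [_]; apply: free.
exists t'; split=> //; split; first by exists k.
move=> s s_in [j ij ijs]; apply: (free s s_in).
by exists j; [rewrite mem_filter ij mem_enum | split].
Qed.

Hypothesis links_distinct : distinct_links c r.

Lemma at_link_inj i j k t : adj i j -> adj i k -> link i j t -> link i k t -> j = k.
Proof.
move=> ij ik ijt ikt; apply: NNPP => jk.
by apply: (links_distinct ij ik jk); rewrite -ijt -ikt.
Qed.

Section LastSurvivor.
Variables (L : {set 'I_n}) (tau : 'I_n -> R) (loc : R -> state n) (rb0 : 'I_n) (T : R).
Hypothesis loc_exec : execution c r F L tau loc.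
Hypothesis rb0_stays : rb0 \notin L.
Hypothesis others_leave : forall rb, rb \notin L -> rb = rb0.
Hypothesis T_ge0 : 0 <= T.
Hypothesis T_after_departures : forall rb, rb \in L -> tau rb <= T.

Local Notation step := (step_ok c r F L tau).

Lemma execution_left_limit t : 0 < t -> exists s eps, 0 < eps /\
  (forall u, t - eps < u < t -> loc u = s) /\ step t s (loc t).
Proof.
case: loc_exec => _ [/(_ t) left_lim _] t_pos.
by have [eps [s [[eps_pos _] [s_lim s_step]]]] := left_lim t_pos; exists s, eps.
Qed.

Lemma execution_step t : 0 <= t -> exists s, step t s (loc t).
Proof.
case/Rle_lt_or_eq_dec=> [/execution_left_limit [s [_ [_ [_ ?]]]] | <-]; first by exists s.
by case: loc_exec => ? _; exists (@init_state n).
Qed.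

Lemma departed_absent rb t : rb \in L -> 0 <= t -> tau rb <= t -> loc t rb = None.
Proof.
by move=> rbL /execution_step [s /(_ rb) [gone _]] tau_le; apply: gone.
Qed.

Lemma survivor_not_departed t : ~ departed L tau rb0 t.
Proof. by case=> rb0L; move: rb0_stays; rewrite rb0L. Qed.

Lemma step_survivor_placed t s s' i : step t s s' -> s rb0 = Some i -> exists j, s' rb0 = Some j.
Proof.
move=> /(_ rb0) [_ /(_ (@survivor_not_departed t)) [_ /[apply]]].
by case=> [[j [_ [_ [_ ->]]]] | [_ ->]]; eexists.
Qed.

Lemma survivor_placed t : 0 <= t -> exists j, loc t rb0 = Some j.
Proof.
apply: (real_induction (P := fun t => exists j, loc t rb0 = Some j))
  => [|t' t'_ge0 [j t'j] | t' t'_pos placed_before].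
- have [s s_step] := execution_step (Rle_refl 0).
  by case: loc_exec => init_step _; apply: step_survivor_placed init_step _.
- case: loc_exec => _ [_ /(_ t' t'_ge0) [e [e_pos right]]].
  by exists e; split=> // u u_in; exists j; rewrite right.
- have [s [eps [eps_pos [s_lim s_step]]]] := execution_left_limit t'_pos.
  have [u [u_in u_near]] := exists_between_near t'_pos eps_pos.
  have [i ui] := placed_before u (conj (Rlt_le _ _ (proj1 u_in)) (proj2 u_in)).
  by rewrite s_lim in ui; [apply: step_survivor_placed s_step ui | lra].
Qed.

Lemma survivor_alone_step t0 t j : T <= t0 < t ->
  (forall u, t0 <= u < t -> loc u rb0 = Some j) ->
  exists s, step t s (loc t) /\ s rb0 = Some j /\ forall rb, rb <> rb0 -> s rb = None.
Proof.
move=> [Tt0 t0t] placed.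
have [s [eps [eps_pos [s_lim s_step]]]] := execution_left_limit (t := t) ltac:(lra).
have [u [u_in u_near]] := exists_between_near t0t eps_pos.
exists s; split=> //; rewrite -(s_lim u); last lra.
split=> [|rb rb_ne]; first by apply: placed; lra.
have rbL : rb \in L by apply: contraT => /others_leave.
by apply: departed_absent => //; [lra | have := T_after_departures rbL; lra].
Qed.

Lemma step_alone_switch t s i k : step t s (loc t) -> s rb0 = Some i ->
  (forall rb, rb <> rb0 -> s rb = None) -> adj i k -> link i k t -> loc t rb0 = Some k.
Proof.
move=> s_step si alone ik ikt.
have k_empty : empty_circle L tau s t k.
  move=> rb; have [-> | /eqP rb_ne] := eqVneq rb rb0; last by rewrite alone.
  by rewrite si => -[ik_eq]; case: (comm_adj_neq ik); rewrite ik_eq.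
have [_ /(_ (@survivor_not_departed t)) [_ /(_ i si)]] := s_step rb0.
case=> [[j [ij [ijt [_ ->]]]] | [blocked _]]; last by case: (blocked k ik ikt).
by rewrite (at_link_inj ij ik ijt ikt).
Qed.

Lemma step_no_link_stay t s i : step t s (loc t) -> s rb0 = Some i ->
  ~ at_some_link i t -> loc t rb0 = Some i.
Proof.
move=> s_step si no_link.
have [_ /(_ (@survivor_not_departed t)) [_ /(_ i si)]] := s_step rb0.
by case=> [[j [ij [ijt _]]] | [_ ->]] //; case: no_link; exists j.
Qed.

Lemma survivor_stays j t0 t1 : T < t0 -> loc t0 rb0 = Some j ->
  (forall s, t0 < s < t1 -> ~ at_some_link j s) ->
  forall s, t0 <= s < t1 -> loc s rb0 = Some j.
Proof.
move=> Tt0 t0j free s [t0s st1]; move: s t0s st1.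
apply: (real_induction (P := fun s => s < t1 -> loc s rb0 = Some j))
  => [// | t t0t IH | t t0t IH tt1].
- have [tt1 | ] := Rlt_le_dec t t1; last by exists 1; split=> [|u]; lra.
  case: loc_exec => _ [_ /(_ t ltac:(lra)) [e [e_pos right]]].
  by exists e; split=> // u u_in _; rewrite right // IH.
- have [s [s_step [sj alone]]] := @survivor_alone_step t0 t j ltac:(lra)
    (fun u u_in => IH u u_in ltac:(lra)).
  by apply: step_no_link_stay s_step sj _; apply: free; lra.
Qed.

Lemma survivor_switches j k t0 t1 : T < t0 < t1 -> loc t0 rb0 = Some j ->
  (forall s, t0 < s < t1 -> ~ at_some_link j s) -> adj j k -> link j k t1 ->
  loc t1 rb0 = Some k.
Proof.
move=> [Tt0 t0t1] t0j free jk jkt1.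
have [s [s_step [sj alone]]] := @survivor_alone_step t0 t1 j ltac:(lra)
  (survivor_stays Tt0 t0j free).
exact: step_alone_switch s_step sj alone jk jkt1.
Qed.

Lemma covered_of_periodic_presence i :
  (forall u, exists s0 (p : Z), (0 < p)%Z /\ (exists z : Z, s0 = u + IZR z) /\
     forall m : nat, loc (s0 + INR m * IZR p) rb0 = Some i) ->
  covered c F loc i.
Proof.
move=> presence theta; have [u u_theta] := robot_point_onto i theta.
have [s0 [p [p_pos [[z s0_u] present]]]] := presence u.
have p_gt0 : 0 < IZR p by apply: IZR_lt.
exists (IZR p), s0; split=> // m; exists (s0 + INR m * IZR p).
split; first by rewrite S_INR; lra.
exists rb0; split=> //; rewrite -u_theta s0_u INR_IZR_INZ Rplus_assoc -mult_IZR -plus_IZR.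
exact: robot_point_shift.
Qed.

Lemma survivor_covers_isolated j t0 : T < t0 -> loc t0 rb0 = Some j ->
  (forall k, ~ adj j k) -> covered c F loc j.
Proof.
move=> Tt0 t0j isolated; apply: covered_of_periodic_presence => u.
have [up_gt up_le] := archimed (t0 - u).
exists (u + IZR (up (t0 - u))), 1%Z; split=> //; split; first by eexists.
move=> m; apply: (survivor_stays (t1 := u + IZR (up (t0 - u)) + INR m + 1) Tt0 t0j).
  by move=> s _ [k jk _]; apply: (isolated k).
by have := pos_INR m; lra.
Qed.

Section Walk.
Hypothesis neighbour_exists : forall i, exists k, adj i k.
Variable j0 : 'I_n.
Hypothesis j0_start : loc (T + 1) rb0 = Some j0.

Definition hop_spec (i : 'I_n) (t : R) (p : R * 'I_n) : Prop :=
  next_point (at_some_link i) t p.1 /\ adj i p.2 /\ link i p.2 p.1.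

Lemma hop_spec_exists i t : exists p, hop_spec i t p.
Proof.
have [t' [tt' [[k ik ikt'] free]]] := next_some_link t (neighbour_exists i).
by exists (t', k); split; [split; [| split; [exists k |]] |].
Qed.

Lemma hop_spec_unique i t p q : hop_spec i t p -> hop_spec i t q -> p = q.
Proof.
case: p q => [p1 p2] [q1 q2].
move=> [[tp1 [_ free_p]] [ip2 ip2p1]] [[tq1 [_ free_q]] [iq2 iq2q1]] /=.
have p1q1 : p1 = q1.
  have [p1q1 | [// | q1p1]] := Rtotal_order p1 q1.
    by case: (free_q p1 (conj tp1 p1q1)); exists p2.
  by case: (free_p q1 (conj tq1 q1p1)); exists q2.
by congr (_, _); last apply: (at_link_inj ip2 iq2 ip2p1); rewrite /= p1q1.
Qed.

Lemma hop_spec_shift i t p (z : Z) :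
  hop_spec i t p -> hop_spec i (t + IZR z) (p.1 + IZR z, p.2).
Proof.
case: p => [p1 p2]; rewrite /hop_spec /next_point /= => -[[tp1 [_ free]] [ip2 ip2p1]].
split; last by split=> //; apply/at_link_shift.
split; first lra; split; first by exists p2 => //; apply/at_link_shift.
move=> s s_in [k ik iks]; apply: (free (s - IZR z)); first lra.
by exists k => //; apply/(at_link_shift _ _ _ z); rewrite Rplus_comm Rplus_minus.
Qed.

Definition hop (i : 'I_n) (t : R) : R * 'I_n :=
  proj1_sig (constructive_indefinite_description _ (hop_spec_exists i t)).

Lemma hopP i t : hop_spec i t (hop i t).
Proof. exact: proj2_sig. Qed.

Fixpoint walk (m : nat) : R * 'I_n :=
  if m is m'.+1 then hop (walk m').2 (walk m').1 else (T + 1, j0).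

Lemma walkS m : walk m.+1 = hop (walk m).2 (walk m).1.
Proof. by []. Qed.

Definition wtime m := (walk m).1.
Definition wcirc m := (walk m).2.

Lemma walk_hop m : hop_spec (wcirc m) (wtime m) (walk m.+1).
Proof. exact: hopP. Qed.

Lemma wtime_ltS m : wtime m < wtime m.+1.
Proof. by case: (walk_hop m) => [[]]. Qed.

Lemma wtime_lt m m' : (m < m')%N -> wtime m < wtime m'.
Proof.
elim: m' => [// | m' IH]; rewrite ltnS leq_eqVlt => /orP [/eqP -> | /IH].
  exact: wtime_ltS.
by have := wtime_ltS m'; lra.
Qed.

Lemma wcirc_adj m : adj (wcirc m) (wcirc m.+1).
Proof. by case: (walk_hop m) => _ []. Qed.

Lemma wcirc_link m : link (wcirc m) (wcirc m.+1) (wtime m.+1).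
Proof. by case: (walk_hop m) => _ []. Qed.

Lemma walk_free m s : wtime m < s < wtime m.+1 -> ~ at_some_link (wcirc m) s.
Proof. by case: (walk_hop m) => [[_ [_ free]]] _; apply: free. Qed.

Lemma survivor_at_wtime m : T < wtime m /\ loc (wtime m) rb0 = Some (wcirc m).
Proof.
elim: m => [|m [Tm mj]]; first by split=> //; rewrite /wtime /=; lra.
have := wtime_ltS m => mm1; split; first lra.
exact: survivor_switches (conj Tm mm1) mj (@walk_free m) (wcirc_adj m) (wcirc_link m).
Qed.

Lemma survivor_on_walk m s : wtime m <= s < wtime m.+1 -> loc s rb0 = Some (wcirc m).
Proof.
have [Tm mj] := survivor_at_wtime m.
exact: survivor_stays Tm mj (@walk_free m) s.
Qed.

Lemma walk_repeats_edge :
  exists a b, (a < b)%N /\ wcirc a = wcirc b /\ wcirc a.+1 = wcirc b.+1.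
Proof.
pose edge (m : 'I_#|{: 'I_n * 'I_n}|.+1) := (wcirc m, wcirc m.+1).
have /injectivePn [x [y xy /pair_equal_spec [eq1 eq2]]] : ~~ injectiveb edge.
  by apply/injectiveP => /leq_card; rewrite card_ord ltnn.
by case: (ltngtP x y) xy => [xy' | yx' | /val_inj ->]; rewrite ?eqxx //;
  [exists x, y | exists y, x].
Qed.

(* Hops commute with integer time shifts, and an edge taken twice is taken at
   link times differing by an integer. *)
Lemma walk_eventually_periodic : exists A P (z : Z), (0 < P)%N /\ (0 < z)%Z /\
  forall m, (A <= m)%N -> walk (m + P) = (wtime m + IZR z, wcirc m).
Proof.
have [a [b [ab [eq1 eq2]]]] := walk_repeats_edge.
have [z zb] : exists z : Z, wtime b.+1 = wtime a.+1 + IZR z.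
  have [t0 t0_link] := at_link_translates (wcirc_adj a).
  have link_b : link (wcirc a) (wcirc a.+1) (wtime b.+1).
    by rewrite eq1 eq2; apply: wcirc_link.
  have [zb ->] := proj1 (t0_link _) link_b.
  have [za ->] := proj1 (t0_link _) (wcirc_link a).
  by exists (zb - za)%Z; rewrite minus_IZR; ring.
have shifted k : walk (a.+1 + k + (b - a)) = (wtime (a.+1 + k) + IZR z, wcirc (a.+1 + k)).
  elim: k => [|k IH].
    rewrite addn0 (_ : a.+1 + (b - a) = b.+1)%N; last lia.
    by rewrite -zb eq2 /wtime /wcirc -surjective_pairing.
  rewrite (_ : _ + _ + _ = (a.+1 + k + (b - a)).+1)%N; last lia.
  rewrite addnS walkS /wcirc /wtime IH /=; symmetry; apply: hop_spec_unique (hopP _ _).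
  exact: hop_spec_shift (walk_hop _).
exists a.+1, (b - a)%N, z; split; first lia.
have periodic m : (a.+1 <= m)%N -> walk (m + (b - a)) = (wtime m + IZR z, wcirc m).
  by move=> am; rewrite -(subnKC am) shifted.
split=> //; apply: lt_IZR.
have := wtime_lt (m := a.+1) (m' := a.+1 + (b - a)) ltac:(lia).
by rewrite {2}/wtime (periodic _ (leqnn _)) /=; lra.
Qed.

Section Periodic.
Variables (A P : nat) (z : Z).
Hypothesis P_pos : (0 < P)%N.
Hypothesis z_pos : (0 < z)%Z.
Hypothesis walk_periodic : forall m, (A <= m)%N -> walk (m + P) = (wtime m + IZR z, wcirc m).
Hypothesis adj_tree : is_tree adj.

Lemma walk_periodic_iter m k : (A <= m)%N ->
  walk (m + k * P) = (wtime m + INR k * IZR z, wcirc m).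
Proof.
move=> Am; elim: k => [|k IH].
  by rewrite mul0n addn0 Rmult_0_l Rplus_0_r -surjective_pairing.
rewrite mulSn (addnC P) addnA walk_periodic; last lia.
by rewrite {1}/wtime {1}/wcirc IH S_INR /=; congr (_, _); ring.
Qed.

Lemma walk_path m d : path adj (wcirc m) [seq wcirc l | l <- iota m.+1 d].
Proof. by elim: d m => [|d IH] m //=; rewrite wcirc_adj IH. Qed.

Lemma walk_last m d : last (wcirc m) [seq wcirc l | l <- iota m.+1 d] = wcirc (m + d).
Proof. by elim: d m => [|d IH] m /=; rewrite ?addn0 ?IH ?addSnnS. Qed.

(* By acyclicity, the first return to [wcirc m] comes back from [wcirc m.+1]. *)
Lemma walk_returns_along_edge m : (A <= m)%N ->
  exists m', (m < m')%N /\ wcirc m' = wcirc m.+1 /\ wcirc m'.+1 = wcirc m.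
Proof.
move=> Am; have back_exists : exists q, (m < q)%N && (wcirc q == wcirc m).
  by exists (m + P)%N; rewrite /wcirc walk_periodic // eqxx andbT; lia.
case: (ex_minnP back_exists) => q /andP [mq /eqP qm] q_min.
have mm1 : wcirc m.+1 != wcirc m by apply/eqP => /esym; apply: comm_adj_neq (wcirc_adj m).
have q_def : q = (m.+1 + (q - m.+2)).+1.
  suff : (m.+1 < q)%N by lia.
  by rewrite ltn_neqAle mq andbT; apply: contraNneq mm1 => ->; rewrite qm.
set d := (q - m.+2)%N in q_def.
exists (m.+1 + d)%N; split; first lia; rewrite -q_def qm; split=> //.
rewrite -walk_last; apply: acyclic_path_back (wcirc_adj m) (walk_path _ _) _ _.
- by case: adj_tree.
- rewrite in_cons negb_or eq_sym mm1 /=; apply/mapP => -[l].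
  rewrite mem_iota => /andP [ml lq] ml_eq.
  by have := q_min l; rewrite -ml_eq eqxx andbT; lia.
- by rewrite walk_last -qm q_def; apply: wcirc_adj.
Qed.

Definition visits_phase (j : 'I_n) (u : R) : Prop := exists m, (A <= m)%N /\ wcirc m = j /\
  exists2 s, wtime m <= s < wtime m.+1 & exists y : Z, s = u + IZR y.

Lemma visits_phase_wtime m : (A <= m)%N -> visits_phase (wcirc m) (wtime m).
Proof.
move=> Am; exists m; split=> //; split=> //; exists (wtime m); last by exists 0%Z; ring.
by have := wtime_ltS m; lra.
Qed.

Lemma visits_phase_shift j u (y : Z) : visits_phase j u -> visits_phase j (u + IZR y).
Proof.
move=> [m [Am [mj [s s_in [y0 s_u]]]]]; exists m; split=> //; split=> //.
by exists s => //; exists (y0 - y)%Z; rewrite minus_IZR; lra.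
Qed.

Lemma visits_phase_right j u : visits_phase j u ->
  exists e, 0 < e /\ forall v, u <= v < u + e -> visits_phase j v.
Proof.
move=> [m [Am [mj [s s_in [y s_u]]]]]; exists (wtime m.+1 - s); split; first lra.
move=> v v_in; exists m; split=> //; split=> //.
by exists (s + (v - u)); [lra | exists y; lra].
Qed.

(* Leaving j at phase u is matched by a later return along the same edge,
   which happens at the same phase. *)
Lemma visits_phase_left j u0 u : u0 < u ->
  (forall v, u0 <= v < u -> visits_phase j v) -> visits_phase j u.
Proof.
move=> u0u visits_before.
have [w [wu w_free]] := at_some_link_left_isolated j u.
pose v := (Rmax w u0 + u) / 2.
have [w_v u0_v v_u] : [/\ w < v, u0 < v & v < u].
  have := Rmax_l w u0; have := Rmax_r w u0; have := Rmax_lub_lt _ _ _ wu u0u.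
  by rewrite /v; split; lra.
have [m [Am [mj [s s_in [y s_v]]]]] := visits_before v ltac:(lra).
have [in_slot | past_slot] := Rlt_le_dec (s + (u - v)) (wtime m.+1).
  by exists m; split=> //; split=> //; exists (s + (u - v)); [lra | exists y; lra].
have jk := wcirc_adj m; have jkt := wcirc_link m; rewrite mj in jk jkt.
have hop_phase : wtime m.+1 = u + IZR y.
  have jkt' : link j (wcirc m.+1) (wtime m.+1 + IZR (- y)) by apply/at_link_shift.
  rewrite opp_IZR in jkt'; apply: NNPP => hop_ne.
  by apply: (w_free (wtime m.+1 - IZR y)); [lra | exists (wcirc m.+1)].
have [m' [mm' [m'k m'j]]] := walk_returns_along_edge Am.
have kjt : link j (wcirc m.+1) (wtime m'.+1).
  by apply/(at_link_sym _ jk); rewrite -m'k -mj -m'j; apply: wcirc_link.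
have [t0 t0_link] := at_link_translates jk.
have [y1 hop1] := proj1 (t0_link _) jkt; have [y2 hop2] := proj1 (t0_link _) kjt.
suff -> : u = wtime m'.+1 + IZR (y1 - y - y2).
  by rewrite -mj -m'j; apply: visits_phase_shift; apply: visits_phase_wtime; lia.
by rewrite !minus_IZR; lra.
Qed.

Lemma visits_phase_all j u0 u : visits_phase j u0 -> visits_phase j u.
Proof.
move=> visits_u0.
have after_u0 : forall v, u0 <= v -> visits_phase j v.
  apply: real_induction => // [v _ | v]; [exact: visits_phase_right | exact: visits_phase_left].
have [up_gt up_le] := archimed (u0 - u).
have := visits_phase_shift (- up (u0 - u)) (after_u0 (u + IZR (up (u0 - u))) ltac:(lra)).
by rewrite opp_IZR Rplus_assoc Rplus_opp_r Rplus_0_r.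
Qed.

Lemma walk_visits_all j : exists2 m, (A <= m)%N & wcirc m = j.
Proof.
suff reach p x : path adj x p -> (exists2 m, (A <= m)%N & wcirc m = x) ->
    exists2 m, (A <= m)%N & wcirc m = last x p.
  case: adj_tree => /(_ (wcirc A) j) /connectP [p p_path ->] _.
  by apply: reach p_path _; exists A.
elim: p x => [// | y p IH] x /= /andP [xy p_path] [m Am mx]; apply: IH => //.
have [u xyu] := at_link_translates xy.
have [m1 [Am1 [m1x [s s_in [ys s_u]]]]] := visits_phase_all u (visits_phase_wtime Am).
rewrite mx in m1x.
have xys : link x y s by rewrite s_u; apply/at_link_shift/xyu; exists 0%Z; ring.
have s_eq : s = wtime m1.
  case/Rle_lt_or_eq_dec: (proj1 s_in) => // m1s.
  by case: (walk_free (conj m1s (proj2 s_in))); exists y; rewrite m1x.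
pose m3 := (m1 + P).-1.
have m3S : m3.+1 = (m1 + P)%N by rewrite /m3; lia.
have m3x : wcirc m3.+1 = x by rewrite m3S /wcirc walk_periodic.
have x_adj_m3 : adj x (wcirc m3) by rewrite -m3x; apply: comm_adj_sym; apply: wcirc_adj.
have x_m3 : link x (wcirc m3) (wtime m3.+1).
  by rewrite -m3x; apply/(at_link_sym _ (comm_adj_sym (wcirc_adj m3))); apply: wcirc_link.
have xy_m3 : link x y (wtime m3.+1).
  by rewrite m3S /wtime walk_periodic //= -s_eq; apply/at_link_shift.
by exists m3; [lia | apply: at_link_inj x_adj_m3 xy x_m3 xy_m3].
Qed.

Lemma survivor_covers_periodic j : covered c F loc j.
Proof.
apply: covered_of_periodic_presence => u.
have [m0 Am0 <-] := walk_visits_all j.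
have [m [Am [<- [s s_in s_u]]]] := visits_phase_all u (visits_phase_wtime Am0).
exists s, z; split=> //; split=> // k.
have [m_k mS_k] := (walk_periodic_iter k Am, walk_periodic_iter k (leqW Am)).
have -> : wcirc m = wcirc (m + k * P) by rewrite /wcirc m_k.
apply: survivor_on_walk.
by rewrite -addSn [wtime (m + _)]/wtime [wtime (m.+1 + _)]/wtime m_k mS_k /=; lra.
Qed.

End Periodic.

Lemma survivor_covers_walk : is_tree adj -> forall j, covered c F loc j.
Proof.
move=> tree j; have [A [P [z [P_pos [z_pos periodic]]]]] := walk_eventually_periodic.
exact: survivor_covers_periodic periodic tree j.
Qed.

End Walk.

Lemma survivor_covers : (0 < n)%N -> is_tree adj -> forall j, covered c F loc j.
Proof.
move=> n_pos tree j; have [j0 j0_start] := survivor_placed (t := T + 1) ltac:(lra).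
case: (ltnP 1 n) => [n_gt1 | n_le1].
  have [connected _] := tree.
  exact: (survivor_covers_walk (connected_neighbour connected n_gt1) j0_start tree j).
have -> : j = j0 by apply: ord_inj; have := ltn_ord j; have := ltn_ord j0; lia.
apply: survivor_covers_isolated (Rlt_n_Sn T) j0_start _ => k /comm_adj_neq [].
by apply: ord_inj; have := ltn_ord k; have := ltn_ord j0; lia.
Qed.

End LastSurvivor.

End SynchronizedSystem.

Lemma one_survivor (n : nat) (L : {set 'I_n}) : (0 < n)%N -> #|L| = (n - 1)%N ->
  exists rb0, rb0 \notin L /\ forall rb, rb \notin L -> rb = rb0.
Proof.
move=> n_pos L_card; have /cards1P [rb0 L_compl] : #|~: L| == 1%N.
  by have := cardsC L; rewrite L_card card_ord; lia.
have in_compl rb : (rb \notin L) = (rb == rb0) by rewrite -in_setC L_compl in_set1.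
by exists rb0; split=> [|rb]; rewrite in_compl // => /eqP.
Qed.

Lemma not_resilient_all (n : nat) (c : 'I_n -> R * R) (r : R) (F : schedule n) :
  (0 < n)%N -> ~ resilient c r F n.
Proof.
move=> n_pos all_leave.
have gone_exec : execution c r F [set: 'I_n] (fun _ => 0) (fun _ _ => None).
  have gone_step t s : 0 <= t -> step_ok c r F [set: 'I_n] (fun _ => 0) t s (fun _ => None).
    by move=> t_ge0 rb; split=> // not_gone; case: not_gone; split; rewrite ?in_setT.
  split; first exact: gone_step (Rle_refl 0).
  split=> t t_ge0; last by exists 1; split; [lra | ].
  by exists t, (fun _ => None); split; [lra | split=> //; apply: gone_step; lra].
have := all_leave _ _ _ _ (fun _ _ => Rle_refl 0) gone_exec (Ordinal n_pos) 0.
rewrite cardsT card_ord => /(_ erefl) [p [T0 [_ /(_ 0%N) [t [_ [rb [//]]]]]]].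
Qed.

Unset Implicit Arguments.

Theorem corollary3 (n : nat) (c : 'I_n -> R * R) (r : R) (F : schedule n) :
  (0 < n)%N -> Rlt 0 r ->
  disjoint_circles c -> distinct_links c r ->
  is_tree (comm_adj c r) ->
  sync_schedule c r F ->
  uncovering_resilience c r F (n - 1)%N.
Proof.
(* The range r only enters through the communication graph. *)
move=> n_pos _ disjoint links tree sync.
split; first exact: leq_subr.
split=> [L tau loc L_card _ exec | k /andP [n1_k k_n]].
  have [rb0 [rb0_stays others_leave]] := one_survivor n_pos L_card.
  have [T [T_ge0 T_ub]] := finite_upper_bound tau.
  exact: (survivor_covers disjoint sync links exec rb0_stays others_leave T_ge0
    (fun rb _ => T_ub rb) n_pos tree).
by rewrite (_ : k = n); [apply: not_resilient_all | lia].
Qed.
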